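(* For every $0<R<\frac12\sqrt{\frac{3}{8\pi}}$ the map $T$ sends $\mathcal{C}^0_R$ into $\mathcal{C}^0_R$.
   Context: Let $\rho_*(R)=\frac{16\pi}{3}R^2$ and $\mathcal{C}^0_R=\{(m,\rho):[0,R]\to\mathbb{R}^2 \text{ continuous}:\ 0\le m(r)\le \frac{4\pi}{3}\rho_*(R)r^3,\ 0\le\rho(r)\le\rho_*(R)\}$. Define $T[m,\rho]=(M[\rho],P[m,\rho])$ with $M[\rho](r)=\int_0^r 4\pi s^2\rho(s)\,ds$ and $P[m,\rho](r)=\int_r^R \frac{1+2\rho(s)}{1-\frac{8\pi}{3}s^2-\frac{2m(s)}{s}}\,\frac{4\pi s}{3}\Big[1+3\rho(s)+\frac{3m(s)}{4\pi s^3}\Big]ds$. *)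

From Stdlib Require Import Reals Lra ClassicalEpsilon.
Open Scope R_scope.

(* Total Riemann integral: the Riemann integral of f over [a,b] when f is
   Riemann integrable there (an unspecified value otherwise; RiemannInt is proof-irrelevant; the main theorem also asserts
   integrability, so this default is never used in the conclusion). *)
Definition Rint (f : R -> R) (a b : R) : R :=
  epsilon (inhabits 0)
    (fun v => exists pr : Riemann_integrable f a b, RiemannInt pr = v).

Definition cont_on (f : R -> R) (a b : R) : Prop :=
  forall x, a <= x <= b -> continue_in f (fun y => a <= y <= b) x.

Definition rho_star (Rr : R) : R := 16 * PI / 3 * Rr ^ 2.

Definition C0 (Rr : R) (m rho : R -> R) : Prop :=
  cont_on m 0 Rr /\ cont_on rho 0 Rr /\
  (forall r, 0 <= r <= Rr ->
     0 <= m r <= 4 * PI / 3 * rho_star Rr * r ^ 3 /\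
     0 <= rho r <= rho_star Rr).

Definition M_integrand (rho : R -> R) (s : R) : R := 4 * PI * s ^ 2 * rho s.

Definition P_integrand (m rho : R -> R) (s : R) : R :=
  (1 + 2 * rho s) / (1 - 8 * PI / 3 * s ^ 2 - 2 * m s / s)
  * (4 * PI * s / 3)
  * (1 + 3 * rho s + 3 * m s / (4 * PI * s ^ 3)).

Definition M_op (rho : R -> R) (r : R) : R := Rint (M_integrand rho) 0 r.

Definition P_op (Rr : R) (m rho : R -> R) (r : R) : R :=
  Rint (P_integrand m rho) r Rr.

From Stdlib Require Import Reals Lra Psatz ClassicalEpsilon.
From Coquelicot Require Import Coquelicot.
Open Scope R_scope.

(* Write c = rho_star R = 16 pi R^2 / 3, so that the radius condition reads c < 1/2,
   and u = 8 pi s^2 / 3 <= c/2.  The bounds defining C^0_R give m(s)/s <= (c/2) u, so the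
   denominator 1 - u - 2m(s)/s of the P-integrand is at least 1 - 3u/2, whose inverse is at
   most 1 + 5u/2.  Hence the integrand is bounded by (1 + 2c)(1 + 4c)(4 pi s / 3)(1 + 5u/2),
   which vanishes linearly at s = 0 and integrates over [0, R] to
   (1 + 2c)(1 + 4c)(c/8 + 5 c^2/64) <= c.  The mass bound is immediate from rho <= c.
   Both integrands are bounded, so M and P are Lipschitz, hence continuous; integrability
   follows after extending m and rho continuously to R by composing with the projection
   onto [0, R]. *)

Lemma Rint_RInt (f : R -> R) (a b : R) : ex_RInt f a b -> Rint f a b = RInt f a b.
Proof.
  intro Hf.
  pose (pr := ex_RInt_Reals_0 _ _ _ Hf).
  unfold Rint.
  destruct (epsilon_spec (inhabits 0)
              (fun v => exists pr : Riemann_integrable f a b, RiemannInt pr = v)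
              (ex_intro _ (RiemannInt pr) (ex_intro _ pr eq_refl))) as [pr' <-].
  symmetry; apply RInt_Reals.
Qed.

Lemma ex_RInt_continuity_pt (f : R -> R) (a b : R) :
  (forall x, continuity_pt f x) -> ex_RInt f a b.
Proof.
  intro Hf; apply (ex_RInt_continuous (V := R_CompleteNormedModule)).
  intros z _; apply continuity_pt_filterlim, Hf.
Qed.

Lemma Rint_RInt_ext (f g : R -> R) (a b : R) : a <= b ->
  (forall x, continuity_pt g x) -> (forall x, a <= x <= b -> f x = g x) ->
  ex_RInt f a b /\ Rint f a b = RInt g a b.
Proof.
  intros Hab Hg Hfg.
  assert (Hf : ex_RInt f a b).
  { apply ex_RInt_ext with g; [|now apply ex_RInt_continuity_pt].
    intros x Hx; symmetry; apply Hfg.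
    rewrite Rmin_left, Rmax_right in Hx; lra. }
  split; [exact Hf|].
  rewrite Rint_RInt by exact Hf.
  apply RInt_ext; intros x Hx; apply Hfg.
  rewrite Rmin_left, Rmax_right in Hx; lra.
Qed.

Lemma abs_RInt_le_const_global (f : R -> R) (K x y : R) :
  (forall t, continuity_pt f t) -> (forall t, Rabs (f t) <= K) ->
  Rabs (RInt f x y) <= K * Rabs (y - x).
Proof.
  intros Hf HK.
  destruct (Rle_dec x y) as [Hxy|Hxy].
  - rewrite (Rabs_right (y - x)) by lra; rewrite Rmult_comm.
    apply abs_RInt_le_const; auto; now apply ex_RInt_continuity_pt.
  - rewrite <- opp_RInt_swap by now apply ex_RInt_continuity_pt.
    change (opp (RInt f y x)) with (- RInt f y x).
    rewrite Rabs_Ropp, (Rabs_left (y - x)) by lra.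
    replace (- (y - x)) with (x - y) by ring; rewrite Rmult_comm.
    apply abs_RInt_le_const; auto; [lra|now apply ex_RInt_continuity_pt].
Qed.

Lemma RInt_lipschitz_upper (f : R -> R) (K a x y : R) :
  (forall t, continuity_pt f t) -> (forall t, Rabs (f t) <= K) ->
  Rabs (RInt f a y - RInt f a x) <= K * Rabs (y - x).
Proof.
  intros Hf HK.
  rewrite <- (RInt_Chasles f a x y) by now apply ex_RInt_continuity_pt.
  change plus with Rplus; rewrite Rplus_minus_l.
  now apply abs_RInt_le_const_global.
Qed.

Lemma RInt_lipschitz_lower (f : R -> R) (K b x y : R) :
  (forall t, continuity_pt f t) -> (forall t, Rabs (f t) <= K) ->
  Rabs (RInt f y b - RInt f x b) <= K * Rabs (y - x).
Proof.
  intros Hf HK.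
  rewrite <- (RInt_Chasles f y x b) by now apply ex_RInt_continuity_pt.
  change plus with Rplus; rewrite Rplus_minus_r.
  rewrite Rabs_minus_sym; now apply abs_RInt_le_const_global.
Qed.

Lemma RInt_antiderivative (g G : R -> R) (a b : R) :
  (forall x, is_derive G x (g x)) -> (forall x, continuity_pt g x) ->
  RInt g a b = G b - G a.
Proof.
  intros HG Hg; apply is_RInt_unique.
  apply (is_RInt_derive (V := R_CompleteNormedModule) G g); intros; auto.
  apply continuity_pt_filterlim, Hg.
Qed.

Lemma continue_in_lipschitz_at (f : R -> R) (D : R -> Prop) (x K : R) : 0 <= K ->
  (forall y, D y -> Rabs (f y - f x) <= K * Rabs (y - x)) -> continue_in f D x.
Proof.
  intros HK Hlip eps Heps.
  exists (eps / (K + 1)); split; [apply Rdiv_lt_0_compat; lra|].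
  intros y [[Hy _] Hdist]; simpl in *; unfold R_dist in *.
  apply Rle_lt_trans with ((K + 1) * Rabs (y - x)).
  - apply Rle_trans with (K * Rabs (y - x)); [now apply Hlip|].
    apply Rmult_le_compat_r; [apply Rabs_pos|lra].
  - apply (Rmult_lt_compat_l (K + 1)) in Hdist; [|lra].
    replace ((K + 1) * (eps / (K + 1))) with eps in Hdist by (field; lra).
    exact Hdist.
Qed.

Lemma cont_on_lipschitz (f : R -> R) (a b K : R) : 0 <= K ->
  (forall x y, a <= x <= b -> a <= y <= b -> Rabs (f y - f x) <= K * Rabs (y - x)) ->
  cont_on f a b.
Proof.
  intros HK Hlip x Hx; apply continue_in_lipschitz_at with K; [exact HK|].
  intros y Hy; now apply Hlip.
Qed.

Lemma continuity_pt_pow_comp (f : R -> R) (n : nat) (x : R) :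
  continuity_pt f x -> continuity_pt (fun y => f y ^ n) x.
Proof.
  intro Hf; induction n as [|n IH]; simpl.
  - now apply continuity_pt_const.
  - now apply continuity_pt_mult.
Qed.

Ltac continuity_pt_tac :=
  repeat first
    [ assumption | apply continuity_pt_minus | apply continuity_pt_plus
    | apply continuity_pt_div | apply continuity_pt_inv | apply continuity_pt_mult
    | apply continuity_pt_pow_comp | apply continuity_pt_id
    | apply continuity_pt_const; intros ? ?; reflexivity ];
  try lra.

(* Composing with the projection onto [0, b] extends a function continuous on [0, b]
   to a continuous function on R. *)
Definition clamp (b x : R) : R := Rmax 0 (Rmin b x).

Section Clamp.
Variable b : R.
Hypothesis Hb : 0 <= b.

Lemma clamp_in x : 0 <= clamp b x <= b.
Proof. unfold clamp, Rmax, Rmin; repeat destruct Rle_dec; lra. Qed.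

Lemma clamp_id x : 0 <= x <= b -> clamp b x = x.
Proof. unfold clamp, Rmax, Rmin; repeat destruct Rle_dec; lra. Qed.

Lemma clamp_nonpos x : x <= 0 -> clamp b x = 0.
Proof. unfold clamp, Rmax, Rmin; repeat destruct Rle_dec; lra. Qed.

Lemma clamp_pos x : 0 < x -> 0 < b -> 0 < clamp b x.
Proof. unfold clamp, Rmax, Rmin; repeat destruct Rle_dec; lra. Qed.

Lemma clamp_lipschitz x y : Rabs (clamp b y - clamp b x) <= Rabs (y - x).
Proof.
  unfold clamp, Rmax, Rmin, Rabs; repeat destruct Rle_dec; repeat destruct Rcase_abs; lra.
Qed.

Lemma continuity_pt_clamp x : continuity_pt (clamp b) x.
Proof.
  apply continue_in_lipschitz_at with 1; [lra|].
  intros y _; rewrite Rmult_1_l; apply clamp_lipschitz.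
Qed.

Lemma continuity_pt_comp_clamp (f : R -> R) x :
  cont_on f 0 b -> continuity_pt (fun y => f (clamp b y)) x.
Proof.
  intros Hf eps Heps.
  destruct (Hf (clamp b x) (clamp_in x) eps Heps) as [d [Hd Hcont]].
  exists d; split; [exact Hd|]; intros y [_ Hy]; simpl in *; unfold R_dist in *.
  destruct (Req_dec (clamp b x) (clamp b y)) as [E|E].
  - rewrite E, Rminus_diag, Rabs_R0; lra.
  - apply (Hcont (clamp b y)); split; [split; [apply clamp_in|exact E]|].
    simpl; unfold R_dist; eapply Rle_lt_trans; [apply clamp_lipschitz|exact Hy].
Qed.

End Clamp.

Lemma rho_star_lt_half (Rr : R) :
  0 < Rr -> Rr < / 2 * sqrt (3 / (8 * PI)) -> rho_star Rr < / 2.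
Proof.
  intros HRr Hsmall; pose proof PI_RGT_0 as HPI.
  assert (Hq : 0 < 3 / (8 * PI)) by (apply Rdiv_lt_0_compat; lra).
  assert (Hsq : sqrt (3 / (8 * PI)) * sqrt (3 / (8 * PI)) = 3 / (8 * PI))
    by (apply sqrt_sqrt; lra).
  pose proof (sqrt_pos (3 / (8 * PI))).
  assert (HR2 : Rr ^ 2 < / 4 * (3 / (8 * PI))) by nra.
  unfold rho_star.
  apply Rlt_le_trans with (16 * PI / 3 * (/ 4 * (3 / (8 * PI)))).
  - apply Rmult_lt_compat_l; [apply Rdiv_lt_0_compat; lra|exact HR2].
  - right; field; lra.
Qed.

(* [u] and [y] stand for [8 pi s^2 / 3] and [m(s) / s]. *)
Lemma P_denominator_bound (rs u y : R) :
  0 <= rs < / 2 -> 0 <= u <= rs / 2 -> 0 <= y <= rs / 2 * u ->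
  0 < 1 - u - 2 * y /\ / (1 - u - 2 * y) <= 1 + 5 / 2 * u.
Proof.
  intros Hrs Hu Hy.
  set (D := 1 - u - 2 * y).
  assert (HD : 1 - 3 / 2 * u <= D) by (unfold D; nra).
  assert (HD1 : 1 <= D * (1 + 5 / 2 * u)) by nra.
  assert (HD0 : 0 < D) by nra.
  split; [exact HD0|].
  apply (Rmult_le_reg_r D); [exact HD0|].
  rewrite Rinv_l by lra; lra.
Qed.

Definition P_majorant (rs s : R) : R :=
  (1 + 2 * rs) * (1 + 4 * rs) * (4 * PI * s / 3) * (1 + 5 / 2 * (8 * PI / 3 * s ^ 2)).

Definition P_slope (rs : R) : R :=
  (1 + 2 * rs) * (1 + 4 * rs) * (4 * PI / 3) * (1 + 5 / 4 * rs).

Lemma P_slope_nonneg (rs : R) : 0 <= rs -> 0 <= P_slope rs.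
Proof.
  intro Hrs; pose proof PI_RGT_0; unfold P_slope.
  apply Rmult_le_pos; [apply Rmult_le_pos; [apply Rmult_le_pos|]|]; lra.
Qed.

Lemma P_integrand_le_majorant (rs s : R) (m rho : R -> R) :
  0 <= rs < / 2 -> 0 < s -> 8 * PI / 3 * s ^ 2 <= rs / 2 ->
  0 <= rho s <= rs -> 0 <= m s <= 4 * PI / 3 * rs * s ^ 3 ->
  0 < 1 - 8 * PI / 3 * s ^ 2 - 2 * m s / s /\
  0 <= P_integrand m rho s <= P_majorant rs s.
Proof.
  intros Hrs Hs Hu Hrho Hm; pose proof PI_RGT_0 as HPI.
  set (u := 8 * PI / 3 * s ^ 2) in *.
  assert (Hu0 : 0 <= u) by (unfold u; nra).
  assert (Hs3 : 0 < 4 * PI * s ^ 3) by (apply Rmult_lt_0_compat; [lra|now apply pow_lt]).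
  assert (Hy : 0 <= m s / s <= rs / 2 * u).
  { split; [apply Rdiv_le_0_compat; lra|].
    apply (Rmult_le_reg_r s); [exact Hs|].
    unfold u; replace (m s / s * s) with (m s) by (field; lra); nra. }
  assert (Hw : 0 <= 3 * m s / (4 * PI * s ^ 3) <= rs).
  { split; [apply Rdiv_le_0_compat; lra|].
    apply (Rmult_le_reg_r (4 * PI * s ^ 3)); [exact Hs3|].
    replace (3 * m s / (4 * PI * s ^ 3) * (4 * PI * s ^ 3)) with (3 * m s)
      by (field; lra); nra. }
  replace (2 * m s / s) with (2 * (m s / s)) by (unfold Rdiv; ring).
  destruct (P_denominator_bound rs u (m s / s)) as [HD HDinv]; try lra.
  split; [exact HD|].
  unfold P_integrand, P_majorant; fold u.
  replace (2 * m s / s) with (2 * (m s / s)) by (unfold Rdiv; ring).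
  set (D := 1 - u - 2 * (m s / s)) in *.
  set (w := 3 * m s / (4 * PI * s ^ 3)) in *.
  assert (Hinv0 : 0 < / D) by (apply Rinv_0_lt_compat; exact HD).
  assert (Hc : 0 <= 4 * PI * s / 3) by (apply Rmult_le_pos; [nra|lra]).
  unfold Rdiv at 1.
  split.
  - apply Rmult_le_pos; [apply Rmult_le_pos; [apply Rmult_le_pos|]|]; lra.
  - replace ((1 + 2 * rs) * (1 + 4 * rs) * (4 * PI * s / 3) * (1 + 5 / 2 * u))
      with ((1 + 2 * rs) * (1 + 5 / 2 * u) * (4 * PI * s / 3) * (1 + 4 * rs)) by ring.
    apply Rmult_le_compat; try lra.
    + apply Rmult_le_pos; [apply Rmult_le_pos|]; lra.
    + apply Rmult_le_compat_r; [exact Hc|].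
      apply Rmult_le_compat; lra.
Qed.

Lemma P_majorant_le_slope (rs s : R) :
  0 <= rs -> 0 <= s -> 8 * PI / 3 * s ^ 2 <= rs / 2 ->
  P_majorant rs s <= P_slope rs * s.
Proof.
  intros Hrs Hs Hu; pose proof PI_RGT_0 as HPI.
  unfold P_majorant, P_slope.
  replace ((1 + 2 * rs) * (1 + 4 * rs) * (4 * PI / 3) * (1 + 5 / 4 * rs) * s)
    with ((1 + 2 * rs) * (1 + 4 * rs) * (4 * PI * s / 3) * (1 + 5 / 2 * (rs / 2))) by field.
  apply Rmult_le_compat_l; [|lra].
  apply Rmult_le_pos; [apply Rmult_le_pos|]; nra.
Qed.

Lemma RInt_P_majorant_le (Rr : R) :
  0 <= rho_star Rr < / 2 -> RInt (P_majorant (rho_star Rr)) 0 Rr <= rho_star Rr.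
Proof.
  intros Hrs; pose proof PI_RGT_0 as HPI.
  set (rs := rho_star Rr) in *.
  rewrite (RInt_antiderivative _
             (fun s => (1 + 2 * rs) * (1 + 4 * rs) * (4 * PI / 3)
                       * (s ^ 2 / 2 + 5 * PI / 3 * s ^ 4))).
  - replace ((1 + 2 * rs) * (1 + 4 * rs) * (4 * PI / 3) * (Rr ^ 2 / 2 + 5 * PI / 3 * Rr ^ 4)
             - (1 + 2 * rs) * (1 + 4 * rs) * (4 * PI / 3) * (0 ^ 2 / 2 + 5 * PI / 3 * 0 ^ 4))
      with ((1 + 2 * rs) * (1 + 4 * rs) * (rs / 8 + 5 * rs ^ 2 / 64))
      by (unfold rs, rho_star; field).
    assert (Hprod : (1 + 2 * rs) * (1 + 4 * rs) * (/ 8 + 5 * rs / 64) <= 1) by nra.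
    nra.
  - intro x; unfold P_majorant; auto_derive; [exact I|field].
  - intro x; unfold P_majorant; continuity_pt_tac.
Qed.

Lemma RInt_mass_majorant (c r : R) :
  RInt (fun s => 4 * PI * s ^ 2 * c) 0 r = 4 * PI / 3 * c * r ^ 3 :> R.
Proof.
  rewrite (RInt_antiderivative _ (fun s => 4 * PI / 3 * c * s ^ 3)).
  - ring.
  - intro x; auto_derive; [exact I|field].
  - intro x; continuity_pt_tac.
Qed.

Section Operators.

Variables (Rr : R) (m rho : R -> R).
Hypotheses (HRr : 0 < Rr) (Hsmall : rho_star Rr < / 2) (HC : C0 Rr m rho).

Lemma rho_star_pos : 0 < rho_star Rr.
Proof.
  unfold rho_star; pose proof PI_RGT_0.
  apply Rmult_lt_0_compat; [lra|now apply pow_lt].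
Qed.

Lemma rho_bound s : 0 <= s <= Rr -> 0 <= rho s <= rho_star Rr.
Proof. intro Hs; destruct HC as [_ [_ Hb]]; apply (Hb s Hs). Qed.

Lemma m_bound s : 0 <= s <= Rr -> 0 <= m s <= 4 * PI / 3 * rho_star Rr * s ^ 3.
Proof. intro Hs; destruct HC as [_ [_ Hb]]; apply (Hb s Hs). Qed.

Lemma radius_bound s : 0 <= s <= Rr -> 8 * PI / 3 * s ^ 2 <= rho_star Rr / 2.
Proof.
  intro Hs; pose proof PI_RGT_0; unfold rho_star.
  assert (s ^ 2 <= Rr ^ 2) by nra.
  replace (16 * PI / 3 * Rr ^ 2 / 2) with (8 * PI / 3 * Rr ^ 2) by field.
  apply Rmult_le_compat_l; [lra|assumption].
Qed.

Lemma P_integrand_le_majorant_on s :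
  0 <= s <= Rr -> 0 <= P_integrand m rho s <= P_majorant (rho_star Rr) s.
Proof.
  intro Hs; pose proof rho_star_pos.
  destruct (Req_dec s 0) as [->|Hs0].
  - unfold P_integrand, P_majorant.
    replace (4 * PI * 0 / 3) with 0 by field; lra.
  - apply P_integrand_le_majorant; try lra.
    + now apply radius_bound.
    + now apply rho_bound.
    + now apply m_bound.
Qed.

Definition M_ext (s : R) : R := M_integrand rho (clamp Rr s).
Definition P_ext (s : R) : R := P_integrand m rho (clamp Rr s).

Lemma M_ext_bounds s : 0 <= M_ext s <= 4 * PI * Rr ^ 2 * rho_star Rr.
Proof.
  pose proof PI_RGT_0; pose proof (clamp_in Rr (Rlt_le _ _ HRr) s) as Hc.
  pose proof (rho_bound _ Hc).
  unfold M_ext, M_integrand; set (t := clamp Rr s) in *.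
  assert (t ^ 2 <= Rr ^ 2) by nra.
  pose proof (pow2_ge_0 t).
  split.
  - apply Rmult_le_pos; [apply Rmult_le_pos|]; lra.
  - apply Rmult_le_compat; [apply Rmult_le_pos; lra|lra|apply Rmult_le_compat_l; lra|lra].
Qed.

Lemma P_ext_bounds s : 0 <= P_ext s <= P_slope (rho_star Rr) * clamp Rr s.
Proof.
  pose proof rho_star_pos; pose proof (clamp_in Rr (Rlt_le _ _ HRr) s) as Hc.
  pose proof (P_integrand_le_majorant_on _ Hc).
  pose proof (P_majorant_le_slope (rho_star Rr) (clamp Rr s)).
  pose proof (radius_bound _ Hc).
  unfold P_ext; lra.
Qed.

Lemma continuity_pt_M_ext x : continuity_pt M_ext x.
Proof.
  destruct HC as [_ [Hrho _]].
  pose proof (continuity_pt_clamp Rr (Rlt_le _ _ HRr) x).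
  pose proof (continuity_pt_comp_clamp Rr (Rlt_le _ _ HRr) rho x Hrho).
  unfold M_ext, M_integrand; continuity_pt_tac.
Qed.

Lemma continuity_pt_P_ext x : continuity_pt P_ext x.
Proof.
  pose proof (Rlt_le _ _ HRr) as HRr0; pose proof rho_star_pos.
  destruct (Rle_dec x 0) as [Hx|Hx].
  - (* The formula is singular at [0]; continuity there comes from the linear bound. *)
    assert (Hslope : 0 <= P_slope (rho_star Rr)) by (apply P_slope_nonneg; lra).
    apply continue_in_lipschitz_at with (P_slope (rho_star Rr)); [exact Hslope|].
    intros y _.
    assert (Hx0 : P_ext x = 0).
    { unfold P_ext, P_integrand; rewrite clamp_nonpos by assumption.
      replace (4 * PI * 0 / 3) with 0 by field; ring. }
    pose proof (P_ext_bounds y).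
    pose proof (clamp_in Rr HRr0 y).
    pose proof (clamp_lipschitz Rr HRr0 x y) as Hlip.
    rewrite (clamp_nonpos Rr HRr0 x Hx), Rminus_0_r, Rabs_right in Hlip by lra.
    rewrite Hx0, Rminus_0_r, Rabs_right by lra.
    apply Rle_trans with (P_slope (rho_star Rr) * clamp Rr y); [lra|].
    apply Rmult_le_compat_l; lra.
  - destruct HC as [Hm [Hrho _]].
    pose proof (continuity_pt_clamp Rr (Rlt_le _ _ HRr) x).
    pose proof (continuity_pt_comp_clamp Rr HRr0 rho x Hrho).
    pose proof (continuity_pt_comp_clamp Rr HRr0 m x Hm).
    assert (Hpos : 0 < clamp Rr x) by (apply clamp_pos; lra).
    assert (Hin : 0 <= clamp Rr x <= Rr) by now apply clamp_in.
    destruct (P_integrand_le_majorant (rho_star Rr) (clamp Rr x) m rho) as [HD _];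
      try lra; [now apply radius_bound|now apply rho_bound|now apply m_bound|].
    assert (0 < clamp Rr x ^ 3) by now apply pow_lt.
    pose proof PI_RGT_0.
    unfold P_ext, P_integrand; continuity_pt_tac; nra.
Qed.

Lemma M_op_RInt r : 0 <= r <= Rr ->
  ex_RInt (M_integrand rho) 0 r /\ M_op rho r = RInt M_ext 0 r.
Proof.
  intro Hr; apply Rint_RInt_ext; [lra|exact continuity_pt_M_ext|].
  intros s Hs; unfold M_ext; rewrite clamp_id; lra.
Qed.

Lemma P_op_RInt r : 0 <= r <= Rr ->
  ex_RInt (P_integrand m rho) r Rr /\ P_op Rr m rho r = RInt P_ext r Rr.
Proof.
  intro Hr; apply Rint_RInt_ext; [lra|exact continuity_pt_P_ext|].
  intros s Hs; unfold P_ext; rewrite clamp_id; lra.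
Qed.

Lemma cont_on_M_op : cont_on (M_op rho) 0 Rr.
Proof.
  pose proof rho_star_pos; pose proof PI_RGT_0.
  apply cont_on_lipschitz with (4 * PI * Rr ^ 2 * rho_star Rr).
  { apply Rmult_le_pos; [|lra]; apply Rmult_le_pos; [lra|apply pow_le; lra]. }
  intros x y Hx Hy.
  rewrite (proj2 (M_op_RInt x Hx)), (proj2 (M_op_RInt y Hy)).
  apply RInt_lipschitz_upper; [exact continuity_pt_M_ext|].
  intro t; pose proof (M_ext_bounds t); rewrite Rabs_right; lra.
Qed.

Lemma cont_on_P_op : cont_on (P_op Rr m rho) 0 Rr.
Proof.
  pose proof (Rlt_le _ _ HRr) as HRr0; pose proof rho_star_pos.
  assert (Hslope : 0 <= P_slope (rho_star Rr)) by (apply P_slope_nonneg; lra).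
  apply cont_on_lipschitz with (P_slope (rho_star Rr) * Rr); [nra|].
  intros x y Hx Hy.
  rewrite (proj2 (P_op_RInt x Hx)), (proj2 (P_op_RInt y Hy)).
  apply RInt_lipschitz_lower; [exact continuity_pt_P_ext|].
  intro t; pose proof (P_ext_bounds t); pose proof (clamp_in Rr HRr0 t).
  rewrite Rabs_right by lra.
  apply Rle_trans with (P_slope (rho_star Rr) * clamp Rr t); [lra|].
  apply Rmult_le_compat_l; lra.
Qed.

Lemma M_op_bounds r : 0 <= r <= Rr -> 0 <= M_op rho r <= 4 * PI / 3 * rho_star Rr * r ^ 3.
Proof.
  intro Hr; pose proof PI_RGT_0.
  assert (Hex : ex_RInt M_ext 0 r) by apply ex_RInt_continuity_pt, continuity_pt_M_ext.
  rewrite (proj2 (M_op_RInt r Hr)); split.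
  - apply RInt_ge_0; [lra|exact Hex|]; intros s _; apply M_ext_bounds.
  - rewrite <- RInt_mass_majorant.
    apply RInt_le; [lra|exact Hex| |].
    + apply ex_RInt_continuity_pt; intro x; continuity_pt_tac.
    + intros s Hs; unfold M_ext, M_integrand; rewrite clamp_id by lra.
      assert (Hs' : 0 <= s <= Rr) by lra; pose proof (rho_bound s Hs').
      apply Rmult_le_compat_l; [|lra].
      apply Rmult_le_pos; [lra|apply pow2_ge_0].
Qed.

Lemma P_op_bounds r : 0 <= r <= Rr -> 0 <= P_op Rr m rho r <= rho_star Rr.
Proof.
  intro Hr; pose proof rho_star_pos.
  assert (Hex : forall a b, ex_RInt P_ext a b)
    by (intros; apply ex_RInt_continuity_pt, continuity_pt_P_ext).
  assert (Hint_nonneg : forall a b, a <= b -> 0 <= RInt P_ext a b)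
    by (intros a b Hab; apply RInt_ge_0; [exact Hab|apply Hex|]; intros s _; apply P_ext_bounds).
  rewrite (proj2 (P_op_RInt r Hr)); split; [apply Hint_nonneg; lra|].
  assert (Hsplit : RInt P_ext 0 r + RInt P_ext r Rr = RInt P_ext 0 Rr)
    by exact (RInt_Chasles P_ext 0 r Rr (Hex _ _) (Hex _ _)).
  assert (Hmaj : RInt P_ext 0 Rr <= RInt (P_majorant (rho_star Rr)) 0 Rr).
  { apply RInt_le; [lra|apply Hex| |].
    - apply ex_RInt_continuity_pt; intro x; unfold P_majorant; continuity_pt_tac.
    - intros s Hs; unfold P_ext; rewrite clamp_id by lra.
      apply P_integrand_le_majorant_on; lra. }
  pose proof (Hint_nonneg 0 r (proj1 Hr)).
  pose proof (RInt_P_majorant_le Rr (conj (Rlt_le _ _ rho_star_pos) Hsmall)).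
  lra.
Qed.

End Operators.

Theorem mainTheorem2 (Rr : R) (m rho : R -> R) :
  0 < Rr -> Rr < / 2 * sqrt (3 / (8 * PI)) ->
  C0 Rr m rho ->
  (forall r, 0 <= r <= Rr ->
     inhabited (Riemann_integrable (M_integrand rho) 0 r) /\
     inhabited (Riemann_integrable (P_integrand m rho) r Rr)) /\
  C0 Rr (M_op rho) (P_op Rr m rho).
Proof.
  intros HRr Hradius HC.
  pose proof (rho_star_lt_half Rr HRr Hradius) as Hsmall.
  split; [|split; [|split]].
  - intros r Hr; split; constructor; apply ex_RInt_Reals_0.
    + now apply (M_op_RInt Rr m rho).
    + now apply (P_op_RInt Rr m rho).
  - now apply (cont_on_M_op Rr m rho).
  - now apply (cont_on_P_op Rr m rho).
  - intros r Hr; split.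
    + now apply (M_op_bounds Rr m rho).
    + now apply (P_op_bounds Rr m rho).
Qed.
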